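(* Let $\mathcal{G}=(I,E)$ be a simple, undirected, connected graph with finite node set $I$, let $\mathfrak{f}\notin I$ and $I_\mathfrak{f}:=I\cup\{\mathfrak{f}\}$. Let $Q\in\mathbb{R}_+^{I\times I}$ and $\mathbf{q}\in\mathbb{R}_+^{I}$ satisfy: $Q_{ij}=0$ iff $\{i,j\}\notin E$, and $\sum_{j\in I}Q_{ij}+q_i=1$ for every $i\in I$. Assume (i) $\mathbf{q}$ is not identically zero and, for every $\ell\in I$, $Q_{I\setminus\{\ell\},I\setminus\{\ell\}}$ is strictly sub-stochastic; and (ii) there is a symmetric $C\in\mathbb{R}_+^{I_\mathfrak{f}\times I_\mathfrak{f}}$ with $Q_{ij}=C_{ij}/\sum_{k\in I_\mathfrak{f}}C_{ik}$ and $q_i=C_{i\mathfrak{f}}/\sum_{k\in I_\mathfrak{f}}C_{ik}$ for all $i,j\in I$. Consider the following Message Passing Algorithm (MPA). For each ordered pair $(i,j)$ with $\{i,j\}\in E$, node $i$ sends to $j$ messages $W^{i\to j}(t)$ and $H^{i\to j}(t)$, $t=0,1,2,\dots$, with $W^{i\to j}(0)=H^{i\to j}(0)=1$ and, synchronously for all such pairs, $$W^{i\to j}(t+1)=\frac{1}{1+\frac{q_i}{Q_{ij}}+\sum_{k\in N_i\setminus\{j\}}\frac{Q_{ik}}{Q_{ij}}\big(1-W^{k\to i}(t)\big)},\qquad H^{i\to j}(t+1)=1+\sum_{k\in N_i\setminus\{j\}}W^{k\to i}(t)\,H^{k\to i}(t),$$ where $N_i=\{w\in I:\{i,w\}\in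 E\}$. Each node $\ell\in I$ computes $H^\ell(t)=1+\sum_{i\in N_\ell}W^{i\to\ell}(t)\,H^{i\to\ell}(t)$. Then the MPA converges: for every ordered pair $(i,j)$ with $\{i,j\}\in E$ the sequences $W^{i\to j}(t)$ and $H^{i\to j}(t)$ converge as $t\to\infty$, and consequently $H^\ell(t)$ converges for every $\ell\in I$.
   Context: A nonnegative matrix is strictly sub-stochastic if all its row sums are $\le 1$ and at least one is $<1$; $Q_{T,T}$ denotes the principal submatrix indexed by $T$. *)

From HB Require Import structures.
From mathcomp Require Import all_boot all_order all_algebra.
From mathcomp Require Import all_classical all_reals all_analysis.
Set Implicit Arguments. Unset Strict Implicit. Unset Printing Implicit Defensive.
Import Order.TTheory GRing.Theory Num.Theory.
Local Open Scope ring_scope.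

Section Defs.
Variables (R : realType) (I : finType).

Definition simple_graph (e : rel I) : Prop :=
  irreflexive e /\ symmetric e.

Definition connected_graph (e : rel I) : Prop :=
  forall x y : I, connect e x y.

(* Q_{T,T} (principal submatrix on T) is strictly sub-stochastic
   (Q is assumed entrywise nonnegative separately) *)
Definition strictly_substochastic_on (Q : I -> I -> R) (T : {set I}) : Prop :=
  (forall i, i \in T -> \sum_(j in T) Q i j <= 1) /\
  (exists2 i, i \in T & \sum_(j in T) Q i j < 1).

(* One synchronous step of the message passing algorithm.
   W k i, H k i stand for W^{k->i}, H^{k->i}; values on non-edges are irrelevant. *)
Definition mpa_step (e : rel I) (Q : I -> I -> R) (q : I -> R)
  (WH : (I -> I -> R) * (I -> I -> R)) : (I -> I -> R) * (I -> I -> R) :=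
  let W := WH.1 in let H := WH.2 in
  (fun i j => (1 + q i / Q i j
                 + \sum_(k | e i k && (k != j)) Q i k / Q i j * (1 - W k i))^-1,
   fun i j => 1 + \sum_(k | e i k && (k != j)) W k i * H k i).

Fixpoint mpa (e : rel I) (Q : I -> I -> R) (q : I -> R) (t : nat)
  : (I -> I -> R) * (I -> I -> R) :=
  match t with
  | 0 => (fun _ _ => 1, fun _ _ => 1)
  | t'.+1 => mpa_step e Q q (mpa e Q q t')
  end.

Definition mpaW e Q q t i j : R := (mpa e Q q t).1 i j.
Definition mpaH e Q q t i j : R := (mpa e Q q t).2 i j.
Definition mpaHnode e Q q t (l : I) : R :=
  1 + \sum_(i | e l i) mpaW e Q q t i l * mpaH e Q q t i l.

End Defs.

(* The W-messages are the iterates, from the all-ones configuration, of the map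
   [mpa_map], which is monotone on [0,1]-valued messages; hence they decrease to
   a limit.  The H-messages obey the linear recursion H(t+1) = 1 + B(t) H(t) whose
   coefficients are the W(t).  Reversibility pi_i Q_ij = pi_j Q_ji (pi_i being the
   total conductance at i) makes [flux f] = pi_i D_t(i,j) (f_i - W_(t+1)(i,j) f_j)
   obey the same recursion, with source pi_i (f - Q f)_i.  For the solution g of
   (1 - Q) g = 1/pi this is a convergent particular solution, so the error
   H - flux g solves the homogeneous recursion.  For the solution h of
   (1 - Q) h = 1, [flux h] is eventually positive (compare W with the increasing
   iterates of [mpa_map] from 0) and is contracted by the homogeneous recursion
   with factor 1 - 1/(1 + sum h); hence the error decays geometrically. *)

From HB Require Import structures.
From mathcomp Require Import all_boot all_order all_algebra.
From mathcomp Require Import all_classical all_reals all_analysis.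
From mathcomp Require Import ring lra.
Import Order.TTheory GRing.Theory Num.Theory.
Import numFieldNormedType.Exports.
Local Open Scope ring_scope.
Local Open Scope classical_set_scope.

Lemma fixpoint_solvable (F : fieldType) (I : finType) (A : I -> I -> F) :
  (forall v : I -> F, (forall i, v i = \sum_k A i k * v k) -> forall i, v i = 0) ->
  forall b : I -> F, exists x : I -> F, forall i, x i = b i + \sum_k A i k * x k.
Proof.
move=> ker0 b.
pose M : 'M[F]_#|I| := \matrix_(a, c) ((a == c)%:R - A (enum_val c) (enum_val a)).
pose vec (v : 'rV[F]_#|I|) i := v 0 (enum_rank i).
have vecME v i : vec (v *m M) i = vec v i - \sum_k A i k * vec v k.
  rewrite /vec !mxE; under eq_bigr do rewrite mxE mulrBr enum_rankK.
  rewrite sumrB (bigD1 (enum_rank i)) //= eqxx mulr1 big1 ?addr0; last first.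
    by move=> a /negbTE ->; rewrite mulr0.
  congr (_ - _); rewrite (reindex (@enum_rank I)) /=; last first.
    by apply: onW_bij; exact: enum_rank_bij.
  by apply: eq_bigr => k _; rewrite enum_rankK mulrC.
have M_unit : M \in unitmx.
  rewrite unitmxE unitfE; apply/negP => /det0P [v /negP v_neq0 vM0]; apply: v_neq0.
  apply/eqP/matrixP => a c; rewrite (ord1 a) !mxE -[c]enum_valK.
  apply: (ker0 (vec v)) => i.
  by have /eqP := congr1 (vec ^~ i) vM0; rewrite vecME /vec mxE subr_eq0 => /eqP.
pose r : 'rV[F]_#|I| := \row_a b (enum_val a).
exists (vec (r *m invmx M)) => i.
have := congr1 (vec ^~ i) (mulmxKV M_unit r); set x := r *m invmx M.
by rewrite vecME [vec r i]mxE enum_rankK => <-; rewrite subrK.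
Qed.

Lemma is_cvgn_sum {K : numFieldType} {V : normedModType K} {J : Type}
    (r : seq J) (P : pred J) (u : J -> nat -> V) :
  (forall k, P k -> cvgn (u k)) -> cvgn (fun t => \sum_(k <- r | P k) u k t).
Proof.
move=> u_cvg; apply/cvg_ex; exists (\sum_(k <- r | P k) lim (u k @ \oo)).
apply: cvg_big => //; exact: add_continuous.
Qed.

Lemma is_cvgn_shiftS {K : numFieldType} {V : normedModType K} (u : nat -> V) :
  cvgn (fun t => u t.+1) = cvgn u.
Proof.
by rewrite propeqE; split=> /cvg_ex[l ul]; apply/cvg_ex; exists l;
  move: ul; rewrite cvg_shiftS.
Qed.

Section MessagePassing.
Set Implicit Arguments. Unset Strict Implicit.
Variables (R : realType) (I : finType) (e : rel I) (Q : I -> I -> R) (q : I -> R).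
Hypothesis e_sym : symmetric e.
Hypothesis e_connected : forall x y : I, connect e x y.
Hypothesis Q_ge0 : forall i j, 0 <= Q i j.
Hypothesis q_ge0 : forall i, 0 <= q i.
Hypothesis Q_eq0 : forall i j, Q i j = 0 <-> ~~ e i j.
Hypothesis Q_row : forall i, \sum_j Q i j + q i = 1.
Variable leak : I.
Hypothesis q_leak : q leak != 0.

Lemma Q_gt0 i j : e i j -> 0 < Q i j.
Proof. by move=> eij; rewrite lt_def Q_ge0 andbT; apply/eqP => /Q_eq0; rewrite eij. Qed.

Lemma sumQE i : \sum_j Q i j = 1 - q i.
Proof. by rewrite -(Q_row i) addrK. Qed.

Lemma sumQ_edge (f : I -> R) i j : e i j ->
  \sum_k Q i k * f k = Q i j * f j + \sum_(k | e i k && (k != j)) Q i k * f k.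
Proof.
move=> eij; rewrite (bigID (e i)) /= [X in _ + X]big1 ?addr0; last first.
  by move=> k /Q_eq0 ->; rewrite mul0r.
by rewrite (bigD1 j).
Qed.

Lemma sumQ_others i j : e i j ->
  \sum_(k | e i k && (k != j)) Q i k = 1 - q i - Q i j.
Proof.
move=> eij; have /= := sumQ_edge (fun=> 1) eij.
rewrite !(eq_bigr _ (fun k _ => mulr1 (Q i k))) mulr1 => sumQ.
by rewrite -(Q_row i) sumQ; ring.
Qed.

Lemma reversible_of_conductance (C : option I -> option I -> R) :
  (forall a b, 0 <= C a b) -> (forall a b, C a b = C b a) ->
  (forall i j, Q i j = C (Some i) (Some j) / \sum_k C (Some i) k) ->
  (forall i, q i = C (Some i) None / \sum_k C (Some i) k) ->
  exists2 pi : I -> R, forall i, 0 < pi i & forall i k, pi i * Q i k = pi k * Q k i.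
Proof.
move=> C_ge0 C_sym QC qC; pose pi i := \sum_k C (Some i) k.
have pi_gt0 i : 0 < pi i.
  rewrite lt_def sumr_ge0 ?andbT //; apply/eqP => pi0.
  have := Q_row i; rewrite qC -/(pi i) pi0 invr0 mulr0 addr0 big1 => [|j _].
    by move/eqP; rewrite eq_sym oner_eq0.
  by rewrite QC -/(pi i) pi0 invr0 mulr0.
exists pi => // i k; rewrite !QC -/(pi i) -/(pi k) C_sym.
by rewrite mulrCA mulfV ?gt_eqF // [RHS]mulrCA mulfV ?gt_eqF.
Qed.

Definition harmonic (v : I -> R) := forall i, v i = \sum_k Q i k * v k.

Lemma harmonic_le0 v : harmonic v -> forall i, v i <= 0.
Proof.
move=> v_harm; have [m _ v_max] := @arg_maxP _ _ I leak predT v isT.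
have {}v_max k : v k <= v m by exact: v_max.
suff : v m <= 0 by move=> vm0 i; exact: le_trans (v_max i) vm0.
rewrite leNgt; apply/negP => vm_gt0.
have max_spread i : v i = v m -> q i = 0 /\ forall k, e i k -> v k = v m.
  move=> vi.
  have defect : \sum_k Q i k * (v m - v k) = - (v m * q i).
    under eq_bigr do rewrite mulrBr.
    by rewrite sumrB -v_harm vi -mulr_suml sumQE; ring.
  have defect_ge0 : 0 <= \sum_k Q i k * (v m - v k).
    by apply: sumr_ge0 => k _; rewrite mulr_ge0 // subr_ge0 v_max.
  have qi0 : q i = 0.
    by apply/eqP; rewrite eq_le q_ge0 andbT -(pmulr_rle0 _ vm_gt0) -oppr_ge0 -defect.
  split=> // k eik; move/eqP: defect; rewrite qi0 mulr0 oppr0 psumr_eq0; last first.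
    by move=> a _; rewrite mulr_ge0 // subr_ge0 v_max.
  move=> /allP /(_ k (mem_index_enum k)) /=; rewrite mulf_eq0 subr_eq0.
  by rewrite gt_eqF ?Q_gt0 //= => /eqP.
pose maxima := [pred x | v x == v m].
have closed_max : closed_mem e (mem maxima).
  move=> x y exy; rewrite !inE; apply/eqP/eqP => [/max_spread[_ ->] //|].
  by move=> /max_spread[_ ->] //; rewrite e_sym.
have : leak \in maxima.
  by rewrite -(closed_connect closed_max (e_connected m leak)) inE.
by rewrite inE => /eqP /max_spread[q0 _]; move: q_leak; rewrite q0 eqxx.
Qed.

Lemma harmonic_eq0 v : harmonic v -> forall i, v i = 0.
Proof.
move=> v_harm i; apply/eqP; rewrite eq_le harmonic_le0 //= -oppr_le0.
apply: (@harmonic_le0 (fun k => - v k)) => k; rewrite v_harm -sumrN.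
by apply: eq_bigr => l _; rewrite mulrN.
Qed.

Lemma exists_potential (b : I -> R) :
  exists x : I -> R, forall i, x i = b i + \sum_k Q i k * x k.
Proof. exact: fixpoint_solvable harmonic_eq0 b. Qed.

Lemma potential_ge1 (h : I -> R) :
  (forall i, h i = 1 + \sum_k Q i k * h k) -> forall i, 1 <= h i.
Proof.
move=> h_eq; have [m _ h_min] := @arg_minP _ _ I leak predT h isT.
have {}h_min k : h m <= h k by exact: h_min.
have h_m_gt0 : 0 < h m.
  have : (1 - q m) * h m <= \sum_k Q m k * h k.
    by rewrite -sumQE mulr_suml; apply: ler_sum => k _; rewrite ler_wpM2l.
  rewrite mulrBl mul1r => h_m_lb; rewrite ltNge; apply/negP => hm_le0.
  have := mulr_ge0_le0 (q_ge0 m) hm_le0; have := h_eq m; lra.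
move=> i; rewrite h_eq lerDl; apply: sumr_ge0 => k _.
by rewrite mulr_ge0 // (le_trans (ltW h_m_gt0)).
Qed.

Definition inflow (w : I -> I -> R) i j := \sum_(k | e i k && (k != j)) Q i k * w k i.
Definition mpa_den w i j := 1 - inflow w i j.
Definition mpa_map w i j := Q i j / mpa_den w i j.
Definition msg_bounded (w : I -> I -> R) := forall k i, e k i -> 0 <= w k i <= 1.
Definition gap (f : I -> R) (w : I -> I -> R) k i := f k - w k i * f i.

Local Notation W t := (mpaW e Q q t).
Local Notation H t := (mpaH e Q q t).

Lemma mpaW_succ t i j : e i j -> W t.+1 i j = mpa_map (W t) i j.
Proof.
move=> eij; rewrite /mpaW /mpa_map /mpa_den /inflow /=; set w := (mpa e Q q t).1.
have Qij_neq0 : Q i j != 0 by rewrite gt_eqF ?Q_gt0.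
rewrite (eq_bigr (fun k => (Q i k - Q i k * w k i) / Q i j)); last first.
  by move=> k _; rewrite mulrAC mulrBr mulr1 mulrBl.
rewrite -mulr_suml sumrB sumQ_others //; set s := \sum_(k | _) _.
have -> : 1 + q i / Q i j + (1 - q i - Q i j - s) / Q i j = (1 - s) / Q i j by field.
by rewrite invf_div.
Qed.

Lemma mpaH_succ t i j :
  H t.+1 i j = 1 + \sum_(k | e i k && (k != j)) W t k i * H t k i.
Proof. by []. Qed.

Section MpaMap.
Variable w : I -> I -> R.
Hypothesis w_bounded : msg_bounded w.

Lemma inflow_ge0 i j : 0 <= inflow w i j.
Proof.
apply: sumr_ge0 => k /andP[eik _]; have eki : e k i by rewrite e_sym.
by have /andP[wki_ge0 _] := w_bounded eki; rewrite mulr_ge0.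
Qed.

Lemma inflow_le i j : e i j -> inflow w i j <= 1 - q i - Q i j.
Proof.
move=> eij; rewrite -sumQ_others //; apply: ler_sum => k /andP[eik _].
have eki : e k i by rewrite e_sym.
by have /andP[_ wki_le1] := w_bounded eki; rewrite ler_piMr.
Qed.

Lemma mpa_den_le1 i j : mpa_den w i j <= 1.
Proof. by rewrite /mpa_den gerBl inflow_ge0. Qed.

Lemma mpa_den_ge i j : e i j -> Q i j + q i <= mpa_den w i j.
Proof. by move=> eij; have := inflow_le eij; rewrite /mpa_den; lra. Qed.

Lemma mpa_den_gt0 i j : e i j -> 0 < mpa_den w i j.
Proof.
by move=> eij; have := mpa_den_ge eij; have := Q_gt0 eij; have := q_ge0 i; lra.
Qed.

Lemma mpa_map_gt0 i j : e i j -> 0 < mpa_map w i j.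
Proof. by move=> eij; rewrite divr_gt0 ?Q_gt0 ?mpa_den_gt0. Qed.

Lemma mpa_map_le1 i j : e i j -> mpa_map w i j <= 1.
Proof.
move=> eij; rewrite ler_pdivrMr ?mpa_den_gt0 // mul1r.
by have := mpa_den_ge eij; have := q_ge0 i; lra.
Qed.

Lemma mpa_map_bounded : msg_bounded (mpa_map w).
Proof. by move=> k i eki; rewrite ltW ?mpa_map_gt0 ?mpa_map_le1. Qed.

End MpaMap.

Lemma inflow_le_inflow w w' i j : (forall k i, e k i -> w k i <= w' k i) ->
  inflow w i j <= inflow w' i j.
Proof.
move=> w_le_w'; apply: ler_sum => k /andP[eik _].
by rewrite ler_wpM2l // w_le_w' // e_sym.
Qed.

Lemma mpa_map_le_map w w' i j : msg_bounded w -> msg_bounded w' ->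
  (forall k i, e k i -> w k i <= w' k i) -> e i j -> mpa_map w i j <= mpa_map w' i j.
Proof.
move=> w_bounded w'_bounded w_le_w' eij.
rewrite ler_wpM2l // lef_pV2 ?posrE ?mpa_den_gt0 //.
by rewrite lerB // inflow_le_inflow.
Qed.

Lemma mpa_map_gapE (f : I -> R) w i j : e i j -> mpa_den w i j != 0 ->
  gap f (mpa_map w) i j * mpa_den w i j =
  (f i - \sum_k Q i k * f k) + \sum_(k | e i k && (k != j)) Q i k * gap f w k i.
Proof.
move=> eij den_neq0; rewrite /gap /mpa_map (sumQ_edge f eij).
under [X in _ = _ + X]eq_bigr do rewrite mulrBr mulrA.
rewrite sumrB -mulr_suml -/(inflow w i j).
move: den_neq0; rewrite /mpa_den; set s := \sum_(k | _) Q i k * f k => den_neq0.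
by field.
Qed.

Lemma mpaW_bounded t : msg_bounded (W t).
Proof.
elim: t => [|t IH] k i eki; first by rewrite /mpaW /= ler01 lexx.
by rewrite mpaW_succ //; apply: mpa_map_bounded.
Qed.

Lemma Q_mpaWE t k i : e k i -> Q k i = W t.+1 k i * mpa_den (W t) k i.
Proof.
move=> eki; rewrite mpaW_succ // divfK // gt_eqF // mpa_den_gt0 //.
exact: mpaW_bounded.
Qed.

Lemma mpaW_gt0 t k i : e k i -> 0 < W t k i.
Proof.
case: t => [|t] eki; first by rewrite /mpaW /= ltr01.
by rewrite mpaW_succ //; apply: mpa_map_gt0 => //; apply: mpaW_bounded.
Qed.

Lemma mpaW_succ_le t k i : e k i -> W t.+1 k i <= W t k i.
Proof.
elim: t k i => [|t IH] k i eki; first by have /andP[_ ->] := mpaW_bounded 1 eki.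
by rewrite !mpaW_succ //; apply: mpa_map_le_map => //; apply: mpaW_bounded.
Qed.

Lemma is_cvg_mpaW k i : e k i -> cvgn (fun t => W t k i).
Proof.
move=> eki; apply: nonincreasing_is_cvgn.
  by apply/nonincreasing_seqP => t; apply: mpaW_succ_le.
by exists 0 => _ [t _ <-]; apply/ltW/mpaW_gt0.
Qed.

Lemma is_cvg_mpa_den i j : cvgn (fun t => mpa_den (W t) i j).
Proof.
apply: is_cvgB; first exact: is_cvg_cst.
apply: is_cvgn_sum => k /andP[eik _]; apply: is_cvgM; first exact: is_cvg_cst.
by apply: is_cvg_mpaW; rewrite e_sym.
Qed.

Definition mpa_low t := iter t mpa_map (fun _ _ => 0).

Lemma mpa_low_bounded t : msg_bounded (mpa_low t).
Proof.
elim: t => [|t IH] k i eki; first by rewrite /= lexx ler01.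
exact: mpa_map_bounded.
Qed.

Lemma mpa_low_le_mpaW t k i : e k i -> mpa_low t k i <= W t k i.
Proof.
elim: t k i => [|t IH] k i eki; first exact/ltW/mpaW_gt0.
rewrite mpaW_succ //; apply: mpa_map_le_map => //.
  exact: mpa_low_bounded.
exact: mpaW_bounded.
Qed.

Lemma mpa_map_subE w w' i j : mpa_den w i j != 0 -> mpa_den w' i j != 0 ->
  mpa_map w i j - mpa_map w' i j =
  mpa_map w i j * (inflow w i j - inflow w' i j) / mpa_den w' i j.
Proof.
by rewrite /mpa_map /mpa_den => den_neq0 den'_neq0; field; rewrite den_neq0 den'_neq0.
Qed.

Section Potential.
Variable h : I -> R.
Hypothesis h_eq : forall i, h i = 1 + \sum_k Q i k * h k.

Definition hmax := 1 + \sum_i h i.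
Definition rate := 1 - hmax^-1.

Let h_ge1 : forall i, 1 <= h i := @potential_ge1 h h_eq.

Lemma h_sub_Qh i : h i - \sum_k Q i k * h k = 1.
Proof. by rewrite {1}h_eq addrK. Qed.

Lemma h_le_hmax i : h i <= hmax.
Proof.
rewrite /hmax (bigD1 i) //= addrCA lerDl addr_ge0 // sumr_ge0 // => j _.
exact: le_trans (h_ge1 j).
Qed.

Lemma hmax_gt0 : 0 < hmax.
Proof. by apply: lt_le_trans (h_le_hmax leak); apply: lt_le_trans (h_ge1 leak). Qed.

Lemma rate_ge0 : 0 <= rate.
Proof. by rewrite subr_ge0 invf_le1 ?hmax_gt0 // (le_trans (h_ge1 leak)) ?h_le_hmax. Qed.

Lemma rate_lt1 : rate < 1.
Proof. by rewrite gtrBl invr_gt0 hmax_gt0. Qed.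

Lemma rate_expr_ge0 n : 0 <= rate ^+ n.
Proof. exact: exprn_ge0 rate_ge0. Qed.

Lemma rate_expr_cvg0 : rate ^+ n @[n --> \oo] --> 0.
Proof. by apply: cvg_expr; rewrite ger0_norm ?rate_ge0 ?rate_lt1. Qed.

Lemma rate_bound x : x <= hmax -> x - 1 <= rate * x.
Proof.
move=> x_le; rewrite /rate mulrBl mul1r lerD2l lerN2 mulrC.
by rewrite ler_pdivrMr ?hmax_gt0 // mul1r.
Qed.

Lemma gap_h_le w k i : msg_bounded w -> e k i -> gap h w k i <= h k.
Proof.
move=> w_bounded eki; have /andP[wki_ge0 _] := w_bounded k i eki.
by rewrite gerBl mulr_ge0 // (le_trans _ (h_ge1 i)).
Qed.

Lemma gap_h_low_ge1 t k i : e k i -> 1 <= gap h (mpa_low t) k i.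
Proof.
elim: t k i => [|t IH] i j eij; first by rewrite /gap mul0r subr0 h_ge1.
have v_bounded := mpa_low_bounded t.
have den_gt0 := mpa_den_gt0 v_bounded eij.
rewrite /= -(ler_pM2r den_gt0) mul1r mpa_map_gapE ?gt_eqF // h_sub_Qh.
apply: le_trans (mpa_den_le1 v_bounded i j) _; rewrite lerDl.
apply: sumr_ge0 => k /andP[eik _]; rewrite mulr_ge0 //.
by apply: le_trans ler01 (IH _ _ _); rewrite e_sym.
Qed.

Lemma mpaW_sub_low_le t k i : e k i ->
  W t k i - mpa_low t k i <= rate ^+ t * gap h (mpa_low t) k i.
Proof.
elim: t k i => [|t IH] i j eij.
  by rewrite /mpaW /= subr0 mul1r /gap mul0r subr0 h_ge1.
set v := mpa_low t; have v_bounded := mpa_low_bounded t.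
have w_bounded := mpaW_bounded t.
have den_gt0 := mpa_den_gt0 v_bounded eij.
set X := gap h (mpa_map v) i j; set D := mpa_den v i j.
have inflow_sub_le : inflow (W t) i j - inflow v i j <= rate ^+ t * (X * D - 1).
  rewrite /X /D mpa_map_gapE ?gt_eqF // h_sub_Qh [X in _ <= _ * X]addrAC subrr add0r.
  rewrite /inflow -sumrB mulr_sumr.
  apply: ler_sum => k /andP[eik _]; rewrite -mulrBr mulrCA ler_wpM2l //.
  by apply: IH; rewrite e_sym.
have XD_le : X * D <= hmax.
  have X_ge1 : 1 <= X := gap_h_low_ge1 t.+1 eij.
  apply: le_trans (h_le_hmax i); apply: le_trans (gap_h_le (mpa_low_bounded t.+1) eij).
  by rewrite ler_piMr ?(le_trans ler01) ?mpa_den_le1.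
have P_le1 : mpa_map (W t) i j <= 1 := mpa_map_le1 w_bounded eij.
have d_ge0 : 0 <= inflow (W t) i j - inflow v i j.
  by rewrite subr_ge0 inflow_le_inflow // => k l ekl; apply: mpa_low_le_mpaW.
have rate_t_ge0 := rate_expr_ge0 t.
rewrite mpaW_succ // mpa_map_subE ?gt_eqF ?mpa_den_gt0 // ler_pdivrMr // -/D.
apply: le_trans (ler_piMl d_ge0 P_le1) _.
apply: le_trans inflow_sub_le _.
by rewrite exprSr -!mulrA ler_wpM2l //; exact: rate_bound.
Qed.

Lemma gap_h_mpaW_lb t k i : e k i -> 1 - rate ^+ t * hmax ^+ 2 <= gap h (W t) k i.
Proof.
move=> eki; have V_bounded := mpa_low_bounded t.
have gapV_ge1 := gap_h_low_ge1 t eki.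
have gapV_le : gap h (mpa_low t) k i <= hmax.
  exact: le_trans (gap_h_le V_bounded eki) (h_le_hmax k).
have rate_t_ge0 := rate_expr_ge0 t.
have hi_ge0 : 0 <= h i := le_trans ler01 (h_ge1 i).
have : (W t k i - mpa_low t k i) * h i <= rate ^+ t * hmax ^+ 2.
  apply: le_trans (ler_wpM2r hi_ge0 (mpaW_sub_low_le t eki)) _.
  rewrite -mulrA ler_wpM2l // expr2 ler_pM ?h_le_hmax //.
  exact: le_trans ler01 gapV_ge1.
move: gapV_ge1; rewrite /gap mulrBl; lra.
Qed.

Section Reversible.
Variable pi : I -> R.
Hypothesis pi_gt0 : forall i, 0 < pi i.
Hypothesis pi_rev : forall i k, pi i * Q i k = pi k * Q k i.

Definition flux (f : I -> R) t i j := pi i * mpa_den (W t) i j * gap f (W t.+1) i j.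

Lemma flux_succ f t i j : e i j -> flux f t.+1 i j =
  pi i * (f i - \sum_k Q i k * f k) + \sum_(k | e i k && (k != j)) W t.+1 k i * flux f t k i.
Proof.
move=> eij; have den_gt0 := mpa_den_gt0 (mpaW_bounded t.+1) eij; rewrite /flux.
have -> : gap f (W t.+2) i j = gap f (mpa_map (W t.+1)) i j by rewrite /gap mpaW_succ.
rewrite -mulrA (mulrC (mpa_den _ i j)) mpa_map_gapE ?gt_eqF //.
rewrite mulrDr mulr_sumr; congr (_ + _); apply: eq_bigr => k /andP[eik _].
have eki : e k i by rewrite e_sym.
by rewrite mulrA pi_rev {1}(Q_mpaWE t eki); ring.
Qed.

Lemma flux_h_succ t i j : e i j ->
  flux h t.+1 i j = pi i + \sum_(k | e i k && (k != j)) W t.+1 k i * flux h t k i.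
Proof. by move=> eij; rewrite flux_succ // h_sub_Qh mulr1. Qed.

Lemma flux_h_le t i j : e i j -> flux h t i j <= pi i * hmax.
Proof.
move=> eij; rewrite /flux -mulrA ler_wpM2l ?(ltW (pi_gt0 i)) //.
have w_bounded := mpaW_bounded t.
have gap_le := le_trans (gap_h_le (mpaW_bounded t.+1) eij) (h_le_hmax i).
have [gap_ge0|gap_lt0] := lerP 0 (gap h (W t.+1) i j).
  by apply: le_trans _ gap_le; rewrite ler_piMl // mpa_den_le1.
by apply: le_trans (ltW hmax_gt0); rewrite pmulr_rle0 ?ltW // mpa_den_gt0.
Qed.

Lemma flux_h_contract t i j : e i j ->
  \sum_(k | e i k && (k != j)) W t.+1 k i * flux h t k i <= rate * flux h t.+1 i j.
Proof.
move=> eij; have := flux_h_le t.+1 eij; rewrite flux_h_succ //.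
set s := \sum_(k | _) _ => flux_le; rewrite /rate mulrBl mul1r.
have : hmax^-1 * (pi i + s) <= pi i by rewrite mulrC ler_pdivrMr ?hmax_gt0.
lra.
Qed.

Lemma exists_flux_h_gt0 : exists T, forall i j, e i j -> 0 < flux h T i j.
Proof.
have hmax2_gt0 : 0 < hmax ^+ 2 := exprn_gt0 _ hmax_gt0.
have inv_hmax2_gt0 : 0 < (hmax ^+ 2)^-1 by rewrite invr_gt0.
have [N _ rate_small] := cvgr_lt _ rate_expr_cvg0 _ inv_hmax2_gt0.
exists N => i j eij; have w_bounded := mpaW_bounded N.
rewrite /flux !mulr_gt0 ?mpa_den_gt0 //.
apply: lt_le_trans (gap_h_mpaW_lb N.+1 eij).
by rewrite subr_gt0 -ltr_pdivlMr // mul1r; apply: rate_small => /=.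
Qed.

Lemma is_cvg_flux f i j : e i j -> cvgn (fun t => flux f t i j).
Proof.
move=> eij; apply: is_cvgM; first by apply: is_cvgM; [exact: is_cvg_cst | exact: is_cvg_mpa_den].
apply: is_cvgB; first exact: is_cvg_cst.
apply: is_cvgM; last exact: is_cvg_cst.
by rewrite (is_cvgn_shiftS (fun t => W t i j)); exact: is_cvg_mpaW.
Qed.

Section ParticularSolution.
Variable g : I -> R.
Hypothesis g_eq : forall i, g i = (pi i)^-1 + \sum_k Q i k * g k.

Definition mpa_err t i j := H t.+1 i j - flux g t i j.

Lemma mpa_err_succ t i j : e i j ->
  mpa_err t.+1 i j = \sum_(k | e i k && (k != j)) W t.+1 k i * mpa_err t k i.
Proof.
move=> eij; rewrite /mpa_err mpaH_succ flux_succ //.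
have -> : g i - \sum_k Q i k * g k = (pi i)^-1 by rewrite {1}g_eq addrK.
rewrite mulfV ?gt_eqF //; under [RHS]eq_bigr do rewrite mulrBr.
by rewrite sumrB; ring.
Qed.

Lemma mpa_err_bound (T : nat) : (forall i j, e i j -> 0 < flux h T i j) ->
  exists2 K, 0 <= K & forall n i j, e i j ->
    `|mpa_err (T + n) i j| <= K * rate ^+ n * flux h (T + n) i j.
Proof.
move=> flux_gt0.
pose K := \big[Num.max/0]_(p : I * I | e p.1 p.2) (`|mpa_err T p.1 p.2| / flux h T p.1 p.2).
have K_ge0 : 0 <= K := bigmax_ge_id _ _ _ _.
exists K => // n.
elim: n => [|n IH] i j eij.
  rewrite addn0 expr0 mulr1 -ler_pdivrMr ?flux_gt0 //.
  exact: (le_bigmax_cond _ (j := (i, j))).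
rewrite addnS mpa_err_succ //; apply: le_trans (ler_norm_sum _ _ _) _.
apply: le_trans (_ : \sum_(k | e i k && (k != j))
  W (T + n).+1 k i * (K * rate ^+ n * flux h (T + n) k i) <= _).
  apply: ler_sum => k /andP[eik _]; have eki : e k i by rewrite e_sym.
  have W_ge0 := ltW (mpaW_gt0 (T + n).+1 eki).
  by rewrite normrM ger0_norm // ler_wpM2l // IH.
under eq_bigr do rewrite mulrCA.
rewrite -mulr_sumr.
have -> : K * rate ^+ n.+1 * flux h (T + n).+1 i j =
          K * rate ^+ n * (rate * flux h (T + n).+1 i j) by rewrite exprS; ring.
by rewrite ler_wpM2l ?mulr_ge0 ?rate_expr_ge0 // flux_h_contract.
Qed.

Lemma mpa_err_cvg0 i j : e i j -> mpa_err t i j @[t --> \oo] --> 0.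
Proof.
move=> eij; have [T flux_gt0] := exists_flux_h_gt0.
have [K K_ge0 err_le] := mpa_err_bound flux_gt0.
set c := K * (pi i * hmax); rewrite -(cvg_shiftn T).
apply: (@squeeze_cvgr _ _ _ _ (fun n => - (c * rate ^+ n)) (fun n => c * rate ^+ n)).
- apply: nearW => n /=; rewrite -ler_norml addnC.
  apply: le_trans (err_le n i j eij) _.
  have -> : c * rate ^+ n = K * rate ^+ n * (pi i * hmax) by rewrite /c; ring.
  by rewrite ler_wpM2l ?flux_h_le // mulr_ge0 // rate_expr_ge0.
- by rewrite -oppr0 -(mulr0 c); apply: cvgN; apply: cvgMl_tmp; exact: rate_expr_cvg0.
- by rewrite -(mulr0 c); apply: cvgMl_tmp; exact: rate_expr_cvg0.
Qed.

Lemma is_cvg_mpaH i j : e i j -> cvgn (fun t => H t i j).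
Proof.
move=> eij; rewrite -(is_cvgn_shiftS (fun t => H t i j)).
have -> : (fun t => H t.+1 i j) = (fun t => flux g t i j + mpa_err t i j).
  by apply/funext => t; rewrite /mpa_err addrC subrK.
apply: is_cvgD; first exact: is_cvg_flux.
exact: cvgP (mpa_err_cvg0 eij).
Qed.

Lemma is_cvg_mpaHnode l : cvgn (fun t => mpaHnode e Q q t l).
Proof.
apply: is_cvgD; first exact: is_cvg_cst.
apply: is_cvgn_sum => i eli; have eil : e i l by rewrite e_sym.
by apply: is_cvgM; [exact: is_cvg_mpaW | exact: is_cvg_mpaH].
Qed.

End ParticularSolution.
End Reversible.
End Potential.

Lemma mpa_cvg (pi : I -> R) :
  (forall i, 0 < pi i) -> (forall i k, pi i * Q i k = pi k * Q k i) ->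
  (forall i j, e i j -> cvgn (fun t => W t i j) /\ cvgn (fun t => H t i j)) /\
  (forall l, cvgn (fun t => mpaHnode e Q q t l)).
Proof.
move=> pi_gt0 pi_rev.
have /= [h h_eq] := exists_potential (fun=> 1).
have /= [g g_eq] := exists_potential (fun i => (pi i)^-1).
split=> [i j eij|l]; first split.
- exact: is_cvg_mpaW.
- exact: (is_cvg_mpaH h_eq pi_gt0 pi_rev g_eq eij).
- exact: (is_cvg_mpaHnode h_eq pi_gt0 pi_rev g_eq).
Qed.

End MessagePassing.

Theorem theorem1 (R : realType) (I : finType) (e : rel I)
  (Q : I -> I -> R) (q : I -> R) :
  simple_graph e -> connected_graph e ->
  (forall i j, 0 <= Q i j) -> (forall i, 0 <= q i) ->
  (forall i j, Q i j = 0 <-> ~~ e i j) ->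
  (forall i, \sum_(j : I) Q i j + q i = 1) ->
  (* (i) *)
  (exists i, q i != 0) ->
  (forall l : I, strictly_substochastic_on Q (~: [set l])) ->
  (* (ii) ; the extra node f is None in option I *)
  (exists C : option I -> option I -> R,
     (forall a b, 0 <= C a b) /\ (forall a b, C a b = C b a) /\
     (forall i j, Q i j = C (Some i) (Some j) / \sum_(k : option I) C (Some i) k) /\
     (forall i, q i = C (Some i) None / \sum_(k : option I) C (Some i) k)) ->
  (forall i j, e i j ->
     cvg ((fun t => mpaW e Q q t i j) @ \oo) /\
     cvg ((fun t => mpaH e Q q t i j) @ \oo)) /\
  (forall l : I, cvg ((fun t => mpaHnode e Q q t l) @ \oo)).
Proof.
move=> [_ e_sym] e_conn Q_ge0 q_ge0 Q_eq0 Q_row [leak q_leak] _.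
move=> [C [C_ge0 [C_sym [QC qC]]]].
have [pi pi_gt0 pi_rev] := reversible_of_conductance Q_row C_ge0 C_sym QC qC.
exact: (mpa_cvg e_sym e_conn Q_ge0 q_ge0 Q_eq0 Q_row q_leak pi_gt0 pi_rev).
Qed.
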